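(* Let $d\ge 3$, $g\ge d$, and write $g=k(d-1)+s$ with $k\ge1$ and $0\le s\le d-2$; put $b=2g+2d-2$. Among all $(d-1)$-tuples that are acceptable for $(d,g)$ and have $a_1=k$, the unique one maximizing $\sum_{i=1}^{d-1}(d-i)a_i$ is: (1) if $s\le d-4$: $(k,(k+1)^{d-s-3},(k+2)^{s+1})$; (2) if $s=d-3$ and $g\neq 2(d-2)$: $(k,(k+2)^{d-2})$; (3) if $s=d-2$, $g\ne 2d-3$ and $(d,g)\ne(3,5)$: $(k,(k+2)^{d-3},k+3)$. (Here $x^m$ denotes $m$ consecutive entries equal to $x$.)
   Context: A non-decreasing $(d-1)$-tuple of natural numbers $(a_1,\dots,a_{d-1})$ with $\sum_{i=1}^{d-1}a_i=b/2$ (where $b=2g+2d-2$, so $b/2=(k+1)(d-1)+s$) is called acceptable for $(d,g)$ if (i) $a_1\ge b/(d(d-1))$; (ii) $a_{d-1}\le b/d$; (iii) $a_{i+1}-a_i\le a_1$ for all $i$. *)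

From mathcomp Require Import all_boot.
Set Implicit Arguments. Unset Strict Implicit. Unset Printing Implicit Defensive.

Definition bval (d g : nat) : nat := 2 * g + 2 * d - 2.

(* A (d-1)-tuple (a_1,...,a_{d-1}) is represented by a list [a; of length d-1,
   with a_i = nth 0 a (i-1). *)
Definition acceptable (d g : nat) (a : seq nat) : Prop :=
  [/\ size a = d.-1 /\ sorted leq a,
      2 * sumn a = bval d g,
      bval d g <= nth 0 a 0 * (d * (d - 1)),         (* (i) a_1 >= b/(d(d-1)) *)
      d * nth 0 a (d - 2) <= bval d g                (* (ii) a_{d-1} <= b/d *)
    & forall i, i.+1 < d.-1 ->
        nth 0 a i.+1 - nth 0 a i <= nth 0 a 0 ].     (* (iii) a_{i+1}-a_i <= a_1 *)

Definition weight (d : nat) (a : seq nat) : nat :=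
  \sum_(i < d.-1) (d - i.+1) * nth 0 a i.

Definition unique_maximizer (d g k : nat) (a : seq nat) : Prop :=
  [/\ acceptable d g a, nth 0 a 0 = k &
      forall a', acceptable d g a' -> nth 0 a' 0 = k -> a' <> a ->
        weight d a' < weight d a].

From mathcomp Require Import all_boot zify.
Set Implicit Arguments. Unset Strict Implicit. Unset Printing Implicit Defensive.

(* With a_1 = k fixed, the weight is (d-1) k plus the sum of the prefix sums
   of the tail (a_2, ..., a_{d-1}), whose total is fixed.  Among non-decreasing
   tails with a given total, the balanced one (entries q and q+1 only) has the
   largest prefix sum at every length: a longer prefix forces its last entry,
   hence every later entry, above q, and then the total overflows.  Equal
   prefix sums at every length force equal tails, which gives uniqueness.  In
   each of the three cases the displayed tuple is k followed by a balanced tail,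
   and the excluded values of g are exactly those where condition (i) or (iii)
   fails. *)

Definition prefix_sum (j : nat) (t : seq nat) : nat := \sum_(i < j) nth 0 t i.

Definition tail_weight (m : nat) (t : seq nat) : nat :=
  \sum_(i < m) (m - i) * nth 0 t i.

Lemma prefix_sum0 t : prefix_sum 0 t = 0.
Proof. by rewrite /prefix_sum big_ord0. Qed.

Lemma prefix_sumS j t : prefix_sum j.+1 t = prefix_sum j t + nth 0 t j.
Proof. by rewrite /prefix_sum big_ord_recr. Qed.

Lemma prefix_sum_size t : prefix_sum (size t) t = sumn t.
Proof. by rewrite /prefix_sum sumnE (big_nth 0) big_mkord. Qed.

Lemma tail_weightE m t : tail_weight m t = \sum_(j < m) prefix_sum j.+1 t.
Proof.
elim: m => [|m IH]; first by rewrite /tail_weight !big_ord0.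
rewrite big_ord_recr /= -IH /tail_weight big_ord_recr subSnn mul1n /=.
rewrite /prefix_sum big_ord_recr /= -/(prefix_sum m t) addnA; congr (_ + _).
rewrite /prefix_sum -big_split; apply: eq_bigr => i _ /=.
by rewrite subSn 1?ltnW // mulSn addnC.
Qed.

Lemma weight_cons m x t : weight m.+2 (x :: t) = m.+1 * x + tail_weight m t.
Proof. by rewrite /weight big_ord_recl. Qed.

Lemma eq_from_prefix_sums s t : size s = size t ->
  (forall j, j < size s -> prefix_sum j.+1 s = prefix_sum j.+1 t) -> s = t.
Proof.
move=> eq_sz eq_ps; apply: (eq_from_nth (x0 := 0)) => // i lt_i.
have eq_psi : prefix_sum i s = prefix_sum i t.
  by case: i lt_i => [|i] lt_i; rewrite ?prefix_sum0 // eq_ps // ltnW.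
by move: (eq_ps i lt_i); rewrite !prefix_sumS eq_psi => /addnI.
Qed.

Lemma ltn_sum_ord n (F G : 'I_n -> nat) j :
  (forall i, F i <= G i) -> F j < G j -> \sum_i F i < \sum_i G i.
Proof.
move=> le_FG lt_FGj; rewrite (bigD1 j) // [X in _ < X](bigD1 j) //=.
by rewrite -addSn leq_add // leq_sum.
Qed.

Section SortedPrefixSums.

Variable t : seq nat.
Hypothesis t_sorted : sorted leq t.

Let nth_mono i j : i <= j -> j < size t -> nth 0 t i <= nth 0 t j.
Proof.
move=> le_ij lt_j; apply: (sorted_leq_nth leq_trans leqnn) => //.
by rewrite inE (leq_ltn_trans le_ij).
Qed.

Lemma prefix_sum_le_nth j : j < size t -> prefix_sum j.+1 t <= j.+1 * nth 0 t j.
Proof.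
elim: j => [|j IH] lt_j; first by rewrite prefix_sumS prefix_sum0 mul1n.
rewrite prefix_sumS mulSn addnC leq_add2l (leq_trans (IH (ltnW lt_j))) //.
by rewrite leq_mul2l nth_mono ?orbT.
Qed.

Lemma prefix_sum_ge_nth j k : j < k -> k <= size t ->
  prefix_sum j.+1 t + (k - j.+1) * nth 0 t j <= prefix_sum k t.
Proof.
elim: k => // k IH lt_jk le_k.
have [lt_jk' | le_kj] := ltnP j k; last first.
  have -> : j = k by lia.
  by rewrite subnn mul0n addn0.
rewrite subSn // mulSn addnCA (prefix_sumS k) (addnC (prefix_sum k t)).
apply: leq_add; [exact: nth_mono (ltnW lt_jk') le_k | exact: IH (ltnW le_k)].
Qed.

End SortedPrefixSums.

Definition balanced (u r q : nat) : seq nat := nseq u q ++ nseq r q.+1.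

Lemma size_balanced u r q : size (balanced u r q) = u + r.
Proof. by rewrite size_cat !size_nseq. Qed.

Lemma sumn_balanced u r q : sumn (balanced u r q) = (u + r) * q + r.
Proof. by rewrite sumn_cat !sumn_nseq; lia. Qed.

Lemma nth_balanced u r q i : nth 0 (balanced u r q) i =
  if i < u then q else if i < u + r then q.+1 else 0.
Proof.
rewrite nth_cat size_nseq !nth_nseq; case: ltnP => // le_ui.
by rewrite ltn_subLR.
Qed.

(* [j - u] is truncated: it vanishes while the prefix stays among the q's. *)
Lemma prefix_sum_balanced u r q j : j <= u + r ->
  prefix_sum j (balanced u r q) = j * q + (j - u).
Proof.
elim: j => [|j IH] le_j; first by rewrite prefix_sum0.
rewrite prefix_sumS (IH (ltnW le_j)) nth_balanced le_j.
by case: ltnP => ?; lia.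
Qed.

Lemma prefix_sum_le_balanced u r q t j : sorted leq t -> size t = u + r ->
  sumn t = sumn (balanced u r q) -> j <= u + r ->
  prefix_sum j t <= prefix_sum j (balanced u r q).
Proof.
move=> t_sorted sz_t sum_t le_j; rewrite prefix_sum_balanced // leqNgt.
apply/negP; case: j le_j => [|j] le_j; first by rewrite prefix_sum0.
move=> big_prefix; have lt_jt : j < size t by rewrite sz_t.
have le_x := prefix_sum_le_nth t_sorted lt_jt.
have ge_sum := prefix_sum_ge_nth t_sorted lt_jt (leqnn _).
rewrite prefix_sum_size sum_t sumn_balanced sz_t in ge_sum.
set x := nth 0 t j in le_x ge_sum.
have lt_qx : q < x.
  rewrite ltnNge; apply/negP => le_xq.
  have : j.+1 * x <= j.+1 * q by rewrite leq_mul2l le_xq orbT.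
  lia.
have [w def_ur] : exists w, u + r = j.+1 + w by exists (u + r - j.+1); rewrite subnKC.
have : w * q.+1 <= w * x by rewrite leq_mul2l lt_qx orbT.
rewrite def_ur addKn mulnDl in ge_sum; rewrite mulnS; lia.
Qed.

Lemma tail_weight_lt_balanced u r q t : sorted leq t -> size t = u + r ->
  sumn t = sumn (balanced u r q) -> t <> balanced u r q ->
  tail_weight (u + r) t < tail_weight (u + r) (balanced u r q).
Proof.
move=> t_sorted sz_t sum_t neq_t; rewrite !tail_weightE.
have le_ps (j : 'I_(u + r)) :
    prefix_sum j.+1 t <= prefix_sum j.+1 (balanced u r q).
  exact: prefix_sum_le_balanced.
case: (pickP (fun j : 'I_(u + r) =>
    prefix_sum j.+1 t < prefix_sum j.+1 (balanced u r q))) => [j lt_j | eq_ps].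
  exact: ltn_sum_ord le_ps lt_j.
case: neq_t; apply: eq_from_prefix_sums => [|j lt_j]; first by rewrite size_balanced.
rewrite sz_t in lt_j; apply/eqP; rewrite eqn_leq (le_ps (Ordinal lt_j)) leqNgt.
by have /= -> := eq_ps (Ordinal lt_j).
Qed.

Lemma unique_maximizer_cons_balanced d g k u r q :
  d = (u + r).+2 -> acceptable d g (k :: balanced u r q) ->
  unique_maximizer d g k (k :: balanced u r q).
Proof.
move=> def_d acc; split=> // -[|x t] [[sz_t t_sorted] sum_t _ _ _] /= eq_x neq_t.
  by rewrite def_d in sz_t.
have [_ sum_b _ _ _] := acc.
rewrite def_d !weight_cons eq_x ltn_add2l; apply: tail_weight_lt_balanced.
- exact: path_sorted t_sorted.
- by rewrite def_d in sz_t; case: sz_t.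
- by move: sum_t sum_b => /= <-; rewrite eq_x => /eqP; rewrite eqn_mul2l => /= /eqP/addnI.
- by move=> eq_t; apply: neq_t; rewrite eq_x eq_t.
Qed.

Lemma acceptable_cons_balanced d g k u r q :
  d = (u + r).+2 -> 0 < u + r -> 1 <= k -> k <= q ->
  2 * (k + sumn (balanced u r q)) = bval d g ->
  bval d g <= k * (d * (d - 1)) ->
  d * nth 0 (balanced u r q) (u + r).-1 <= bval d g ->
  nth 0 (balanced u r q) 0 <= 2 * k ->
  acceptable d g (k :: balanced u r q).
Proof.
move=> -> pos_ur pos_k le_kq sum_b cond_i cond_ii head_jump; split=> //.
- split; first by rewrite /= size_balanced.
  apply/(sortedP 0) => -[|i]; rewrite /= size_balanced => lt_i;
    by rewrite !nth_balanced; do ?case: ifP => ?; lia.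
- by have -> : (u + r).+2 - 2 = (u + r).-1.+1 by lia.
- move=> [|i] lt_i /=; first lia.
  by rewrite !nth_balanced; do ?case: ifP => ?; lia.
Qed.

Lemma bval_le_head d k s : 2 <= d ->
  2 * s + 2 * d <= k * ((d - 1) * (d - 2)) + 2 ->
  bval d (k * (d - 1) + s) <= k * (d * (d - 1)).
Proof.
case: d => [|[|m]] // _; rewrite /bval !subSS !subn0.
have -> : m.+2 * m.+1 = 2 * m.+1 + m.+1 * m by nia.
rewrite mulnDr; lia.
Qed.

Lemma unique_maximizer_case1 d k s : 1 <= k -> s + 4 <= d ->
  unique_maximizer d (k * (d - 1) + s) k (k :: balanced (d - s - 3) s.+1 k.+1).
Proof.
move=> pos_k le_sd.
apply: unique_maximizer_cons_balanced; first lia.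
apply: acceptable_cons_balanced; rewrite ?sumn_balanced ?nth_balanced; try lia.
- rewrite /bval; nia.
- apply: bval_le_head; first lia.
  have [n def_d] : exists n, d = n + s + 4 by exists (d - s - 4); lia.
  have := leq_pmull ((d - 1) * (d - 2)) pos_k.
  rewrite def_d; nia.
- rewrite /bval; do ?case: ifP => ?; nia.
- by do ?case: ifP => ?; lia.
Qed.

Lemma unique_maximizer_case2 d k : 3 <= d -> 2 <= k ->
  unique_maximizer d (k * (d - 1) + (d - 3)) k (k :: balanced (d - 2) 0 k.+2).
Proof.
move=> le3d le2k.
apply: unique_maximizer_cons_balanced; first lia.
apply: acceptable_cons_balanced; rewrite ?sumn_balanced ?nth_balanced; try lia.
- rewrite /bval; nia.
- apply: bval_le_head; first lia.
  have [n def_d] : exists n, d = n + 3 by exists (d - 3); lia.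
  have := leq_mul2r ((d - 1) * (d - 2)) 2 k; rewrite le2k orbT.
  rewrite def_d; nia.
- rewrite /bval; do ?case: ifP => ?; nia.
- by do ?case: ifP => ?; lia.
Qed.

Lemma unique_maximizer_case3 d k : 3 <= d -> 2 <= k -> (d = 3 -> 3 <= k) ->
  unique_maximizer d (k * (d - 1) + (d - 2)) k (k :: balanced (d - 3) 1 k.+2).
Proof.
move=> le3d le2k le3k.
apply: unique_maximizer_cons_balanced; first lia.
have [eq_d3 | ne_d3] := eqVneq d 3.
  have := le3k eq_d3; rewrite eq_d3 => le3k'.
  by apply: acceptable_cons_balanced; rewrite /bval /=; lia.
apply: acceptable_cons_balanced; rewrite ?sumn_balanced ?nth_balanced; try lia.
- rewrite /bval; nia.
- apply: bval_le_head; first lia.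
  have [n def_d] : exists n, d = n + 4 by exists (d - 4); lia.
  have := leq_mul2r ((d - 1) * (d - 2)) 2 k; rewrite le2k orbT.
  rewrite def_d; nia.
- rewrite /bval; do ?case: ifP => ?; nia.
- by do ?case: ifP => ?; lia.
Qed.

Theorem mainTheorem4 (d g k s : nat) :
  3 <= d -> d <= g -> 1 <= k -> s <= d - 2 -> g = k * (d - 1) + s ->
  [/\ s + 4 <= d ->
        unique_maximizer d g k
          ([:: k] ++ nseq (d - s - 3) k.+1 ++ nseq s.+1 k.+2),
      s = d - 3 -> g <> 2 * (d - 2) ->
        unique_maximizer d g k ([:: k] ++ nseq (d - 2) k.+2)
    & s = d - 2 -> g <> 2 * d - 3 -> (d, g) <> (3, 5) ->
        unique_maximizer d g k ([:: k] ++ nseq (d - 3) k.+2 ++ [:: k + 3])].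
Proof.
move=> le3d _ pos_k _ ->.
split=> [le_sd | -> neq_g | -> neq_g neq_dg].
- exact: unique_maximizer_case1.
- have le2k : 1 < k by case: k pos_k neq_g => [|[|k]] // _; rewrite mul1n; lia.
  have -> : [:: k] ++ nseq (d - 2) k.+2 = k :: balanced (d - 2) 0 k.+2.
    by rewrite /balanced cats0.
  exact: unique_maximizer_case2.
- have le2k : 1 < k by case: k pos_k neq_g neq_dg => [|[|k]] // _; rewrite mul1n; lia.
  have -> : [:: k] ++ nseq (d - 3) k.+2 ++ [:: k + 3] = k :: balanced (d - 3) 1 k.+2.
    by rewrite addn3.
  apply: unique_maximizer_case3 => // eq_d3; rewrite ltnNge; apply/negP => le_k2.
  by apply: neq_dg; rewrite eq_d3 (_ : k = 2) //; lia.
Qed.
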